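(* Let $M$ be a universal semi-POVM and let $m$ be a universal probability. Then there is a real $c>0$ such that for all $s\in\Sigma^*$, $c\,M(s)\leqslant m(s)I$ and $c\,m(s)I\leqslant M(s)$.
   Context: $N$ is a fixed positive integer; $\Sigma^*$ is the set of finite binary strings. $\mathrm{Her}(N)$ is the set of $N\times N$ Hermitian matrices and $\mathrm{Her}_Q(N)$ those with entries in $\{a+ib:a,b\in\mathbb{Q}\}$; $A\leqslant B$ means $B-A$ is positive semi-definite. A lower-computable semi-measure is a function $r:\Sigma^*\to[0,\infty)$ with $\sum_s r(s)\le 1$ such that there is a total recursive $f:\mathbb{N}\times\Sigma^*\to\mathbb{Q}$ with $\lim_{n}f(n,s)=r(s)$ and $f(n,s)\le f(n+1,s)$ for all $n,s$. A universal probability is a lower-computable semi-measure $m$ such that for every lower-computable semi-measure $r$ there is $c>0$ with $c\,r(s)\le m(s)$ for all $s$. A semi-POVM on $\Sigma^*$ is a map $R:\Sigma^*\to\mathrm{Her}(N)$ with $0\leqslant R(s)$ for all $s$ and $\sum_s R(s)\leqslant I$. A lower-computable semi-POVM is a semi-POVM $R$ for which there is a total recursive $f:\mathbb{N}\times\Sigma^*\to\mathrm{Her}_Q(N)$ with $\lim_{n}f(n,s)=R(s)$ and $f(n,s)\leqslant R(s)$ for all $n,s$. A universal semi-POVM is a lower-computable semi-POVM $M$ such that for every lower-computable semi-POVM $R$ there is $c>0$ with $c\,R(s)\leqslant M(s)$ for all $s\in\Sigma^*$. *)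

From HB Require Import structures.
From mathcomp Require Import all_boot all_order all_algebra.
From mathcomp Require Import all_classical all_reals.
From mathcomp Require Import topology normedtype sequences esum.
From mathcomp Require Import complex.

Set Implicit Arguments.
Unset Strict Implicit.
Unset Printing Implicit Defensive.

Import Order.TTheory GRing.Theory Num.Theory.
Import numFieldNormedType.Exports.
Local Open Scope ring_scope.
Local Open Scope classical_set_scope.

Inductive rcode : Type :=
| RZero : rcode
| RSucc : rcode
| RProj : nat -> rcode
| RComp : rcode -> seq rcode -> rcode
| RPrec : rcode -> rcode -> rcode
| RMu   : rcode -> rcode.

Inductive reval : rcode -> seq nat -> nat -> Prop :=
| ev_zero xs : reval RZero xs 0
| ev_succ x xs : reval RSucc (x :: xs) x.+1
| ev_proj i xs : reval (RProj i) xs (nth 0 xs i)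
| ev_comp f gs xs ys y :
    revals gs xs ys -> reval f ys y -> reval (RComp f gs) xs y
| ev_prec0 g h xs y : reval g xs y -> reval (RPrec g h) (0 :: xs) y
| ev_precS g h n xs z y :
    reval (RPrec g h) (n :: xs) z -> reval h (n :: z :: xs) y ->
    reval (RPrec g h) (n.+1 :: xs) y
| ev_mu f xs n (vs : nat -> nat) :
    reval f (n :: xs) 0 ->
    (forall k, (k < n)%N -> vs k <> 0%N /\ reval f (k :: xs) (vs k)) ->
    reval (RMu f) xs n
with revals : seq rcode -> seq nat -> seq nat -> Prop :=
| evs_nil xs : revals [::] xs [::]
| evs_cons g gs xs y ys :
    reval g xs y -> revals gs xs ys -> revals (g :: gs) xs (y :: ys).

(* bijective base-2 numbering of finite binary strings *)
Fixpoint enc_str (s : seq bool) : nat :=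
  match s with
  | [::] => 0%N
  | b :: s' => ((enc_str s').*2 + (if b then 2 else 1))%N
  end.

(* k.+1 = 2^a * (2b+1)  |->  (a, b) : a bijection nat -> nat * nat *)
Definition unpair (k : nat) : nat * nat :=
  let a := logn 2 k.+1 in (a, ((k.+1 %/ 2 ^ a)%N)./2).

(* zig-zag decoding of integers *)
Definition dec_int (n : nat) : int :=
  if odd n then - (n.+1./2)%:Z else (n./2)%:Z.

Definition dec_rat (k : nat) : rat :=
  let: (a, b) := unpair k in (dec_int a)%:~R / (b.+1)%:R.

Definition total_recursive_rat (F : nat -> seq bool -> rat) : Prop :=
  exists c : rcode, forall n s, exists k,
    reval c [:: n; enc_str s] k /\ dec_rat k = F n s.

Section Defs.
Variable R : realType.

Definition semi_measure (r : seq bool -> R) : Prop :=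
  (forall s, 0 <= r s) /\ (\esum_(s in [set: seq bool]) (r s)%:E <= 1)%E.

Definition lower_computable_semimeasure (r : seq bool -> R) : Prop :=
  semi_measure r /\
  exists F : nat -> seq bool -> rat,
    total_recursive_rat F /\
    (forall n s, F n s <= F n.+1 s) /\
    (forall s, (fun n => (ratr (F n s) : R)) @ \oo --> r s).

Definition universal_probability (m : seq bool -> R) : Prop :=
  lower_computable_semimeasure m /\
  forall r, lower_computable_semimeasure r ->
    exists2 c : R, 0 < c & forall s, c * r s <= m s.

Local Open Scope complex_scope.

Definition adjmx (N : nat) (A : 'M[R[i]]_N) : 'M[R[i]]_N :=
  (map_mx (fun z : R[i] => z^*) A)^T.

Definition hermitian (N : nat) (A : 'M[R[i]]_N) : Prop := adjmx A = A.

(* positive semi-definite (in the order of R[i], 0 <= z means z is real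
   and nonnegative) *)
Definition psd (N : nat) (A : 'M[R[i]]_N) : Prop :=
  hermitian A /\
  forall v : 'cV[R[i]]_N,
    0 <= ((map_mx (fun z : R[i] => z^*) v)^T *m A *m v) 0 0.

Definition loewner_le (N : nat) (A B : 'M[R[i]]_N) : Prop := psd (B - A).

Definition semiPOVM (N : nat) (M : seq bool -> 'M[R[i]]_N) : Prop :=
  (forall s, loewner_le 0 (M s)) /\
  forall S : seq (seq bool), uniq S ->
    loewner_le (\sum_(s <- S) M s) 1%:M.

Definition qi (a b : rat) : R[i] := (ratr a : R) +i* (ratr b : R).

(* F : nat * Sigma^* -> Her_Q(N) is total recursive: a single program c
   computes, on input (n, s, i, j, p), the real (p = 0) resp. imaginary
   (p = 1) part of the entry (i, j) of F n s. *)
Definition total_recursive_herQ (N : nat)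
    (F : nat -> seq bool -> 'M[R[i]]_N) : Prop :=
  (forall n s, hermitian (F n s)) /\
  exists c : rcode, forall n s (i j : 'I_N), exists kr ki,
    reval c [:: n; enc_str s; (i : nat); (j : nat); 0%N] kr /\
    reval c [:: n; enc_str s; (i : nat); (j : nat); 1%N] ki /\
    F n s i j = qi (dec_rat kr) (dec_rat ki).

Definition lower_computable_semiPOVM (N : nat)
    (M : seq bool -> 'M[R[i]]_N) : Prop :=
  semiPOVM M /\
  exists F : nat -> seq bool -> 'M[R[i]]_N,
    total_recursive_herQ F /\
    (forall s (i j : 'I_N),
        (fun n => Re (F n s i j)) @ \oo --> Re (M s i j) /\
        (fun n => Im (F n s i j)) @ \oo --> Im (M s i j)) /\
    (forall n s, loewner_le (F n s) (M s)).

Definition universal_semiPOVM (N : nat) (M : seq bool -> 'M[R[i]]_N) : Prop :=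
  lower_computable_semiPOVM M /\
  forall Q : seq bool -> 'M[R[i]]_N, lower_computable_semiPOVM Q ->
    exists2 c : R, 0 < c & forall s, loewner_le (c%:C *: Q s) (M s).

End Defs.

From Pilot Require Import Defs.
From HB Require Import structures.
From mathcomp Require Import all_boot all_order all_algebra.
From mathcomp Require Import all_classical all_reals.
From mathcomp Require Import complex.
From mathcomp Require Import ereal topology normedtype sequences esum ring.
Import Order.TTheory GRing.Theory Num.Theory.
Import numFieldNormedType.Exports.
Set Implicit Arguments.
Unset Strict Implicit.
Unset Printing Implicit Defensive.

(* Both inequalities come from universality.  The family [s |-> m(s) I] is a
   lower-computable semi-POVM, so universality of [M] gives [c m(s) I <= M(s)].
   Conversely each diagonal [s |-> M(s)_jj] is a lower-computable semi-measure:
   its rational approximations stay below it but need not increase, so we pass to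
   their running maxima, which a mu-recursive program computes by comparing codes
   of rationals.  Universality of [m] then bounds [tr M(s)] by a multiple of
   [m(s)], and a positive semi-definite [A] satisfies [A <= 2^N tr(A) I]. *)

Definition computes (c : rcode) (f : seq nat -> nat) := forall xs, reval c xs (f xs).

Local Notation a0 xs := (nth 0%N xs 0).
Local Notation a1 xs := (nth 0%N xs 1).
Local Notation a2 xs := (nth 0%N xs 2).

Lemma computes_ext c f g : computes c f -> f =1 g -> computes c g.
Proof. by move=> h e xs; rewrite -e. Qed.

Lemma computes_zero : computes RZero (fun _ => 0%N).
Proof. by move=> xs; apply: ev_zero. Qed.

Lemma computes_proj i : computes (RProj i) (fun xs => nth 0%N xs i).
Proof. by move=> xs; apply: ev_proj. Qed.

Lemma computes_comp1 f (F : nat -> nat) g G :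
  computes f (fun xs => F (a0 xs)) -> computes g G ->
  computes (RComp f [:: g]) (fun xs => F (G xs)).
Proof. by move=> hf hg xs; apply: ev_comp (hf [:: G xs]); do ! constructor. Qed.

Lemma computes_comp2 f (F : nat -> nat -> nat) g G h H :
  computes f (fun xs => F (a0 xs) (a1 xs)) -> computes g G -> computes h H ->
  computes (RComp f [:: g; h]) (fun xs => F (G xs) (H xs)).
Proof. by move=> hf hg hh xs; apply: ev_comp (hf [:: G xs; H xs]); do ! constructor. Qed.

Lemma computes_comp3 f (F : nat -> nat -> nat -> nat) g G h H k K :
  computes f (fun xs => F (a0 xs) (a1 xs) (a2 xs)) ->
  computes g G -> computes h H -> computes k K ->
  computes (RComp f [:: g; h; k]) (fun xs => F (G xs) (H xs) (K xs)).
Proof.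
by move=> hf hg hh hk xs; apply: ev_comp (hf [:: G xs; H xs; K xs]); do ! constructor.
Qed.

Definition rsucc := RComp RSucc [:: RProj 0].

Lemma computes_succ : computes rsucc (fun xs => (a0 xs).+1).
Proof. by move=> xs; apply: (@ev_comp _ _ _ [:: a0 xs]); do ! constructor. Qed.

Fixpoint rconst (n : nat) : rcode :=
  if n is n'.+1 then RComp RSucc [:: rconst n'] else RZero.

Lemma computes_const n : computes (rconst n) (fun _ => n).
Proof.
elim: n => [|n IH] xs; first exact: ev_zero.
by apply: (@ev_comp _ _ _ [:: n]); do ! constructor.
Qed.

Fixpoint prim_rec (G : nat -> nat) (H : nat -> nat -> nat -> nat) n y :=
  if n is n'.+1 then H n' (prim_rec G H n' y) y else G y.

Definition rprec g h := RComp (RPrec g h) [:: RProj 0; RProj 1].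

Lemma computes_prec g G h H :
  computes g (fun xs => G (a0 xs)) ->
  computes h (fun xs => H (a0 xs) (a1 xs) (a2 xs)) ->
  computes (rprec g h) (fun xs => prim_rec G H (a0 xs) (a1 xs)).
Proof.
move=> hg hh xs; apply: ev_comp; first by do ! constructor.
elim: (a0 xs) => [|n IH] /=; first exact/ev_prec0/hg.
exact: ev_precS IH (hh _).
Qed.

Lemma computes_mu f (F : nat -> seq nat -> nat) (G : seq nat -> nat) :
  computes f (fun xs => F (a0 xs) (behead xs)) ->
  (forall xs, F (G xs) xs = 0%N) ->
  (forall xs k, (k < G xs)%N -> F k xs <> 0%N) ->
  computes (RMu f) G.
Proof.
move=> hf h0 hk xs; apply: (@ev_mu _ _ _ (fun k => F k xs)).
  by move: (hf (G xs :: xs)); rewrite /= h0.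
by move=> k lt; split; [exact: hk | move: (hf (k :: xs))].
Qed.

Definition radd := rprec (RProj 0) (RComp rsucc [:: RProj 1]).

Lemma computes_add : computes radd (fun xs => a0 xs + a1 xs)%N.
Proof.
apply: computes_ext (computes_prec (G := id) (H := fun _ z _ => z.+1)
  (computes_proj 0) (computes_comp1 computes_succ (computes_proj 1))) _.
by move=> xs /=; elim: (a0 xs) => //= n ->.
Qed.

Definition rmul := rprec RZero (RComp radd [:: RProj 1; RProj 2]).

Lemma computes_mul : computes rmul (fun xs => a0 xs * a1 xs)%N.
Proof.
apply: computes_ext (computes_prec (G := fun _ => 0%N) (H := fun _ z y => z + y)%N
  computes_zero (computes_comp2 computes_add (computes_proj 1) (computes_proj 2))) _.
by move=> xs /=; elim: (a0 xs) => //= n ->; rewrite mulSn addnC.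
Qed.

Definition rpred := RComp (rprec RZero (RProj 0)) [:: RProj 0; RProj 0].

Lemma computes_pred : computes rpred (fun xs => (a0 xs).-1).
Proof.
apply: computes_ext (computes_comp2 (F := prim_rec (fun _ => 0%N) (fun n _ _ => n))
  (computes_prec computes_zero (computes_proj 0)) (computes_proj 0) (computes_proj 0)) _.
by move=> xs; case: (a0 xs).
Qed.

Definition rsub := RComp (rprec (RProj 0) (RComp rpred [:: RProj 1])) [:: RProj 1; RProj 0].

Lemma computes_sub : computes rsub (fun xs => a0 xs - a1 xs)%N.
Proof.
apply: computes_ext (computes_comp2 (F := prim_rec id (fun _ z _ => z.-1))
  (computes_prec (computes_proj 0) (computes_comp1 computes_pred (computes_proj 1)))
  (computes_proj 1) (computes_proj 0)) _.
by move=> xs /=; elim: (a1 xs) => [|n IH] /=; rewrite ?subn0 // IH subnS.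
Qed.

Definition rexp2 := RComp (rprec (rconst 1) (RComp radd [:: RProj 1; RProj 1]))
  [:: RProj 0; RProj 0].

Lemma computes_exp2 : computes rexp2 (fun xs => 2 ^ a0 xs)%N.
Proof.
apply: computes_ext (computes_comp2 (F := prim_rec (fun _ => 1%N) (fun _ z _ => z + z)%N)
  (computes_prec (computes_const 1)
     (computes_comp2 computes_add (computes_proj 1) (computes_proj 1)))
  (computes_proj 0) (computes_proj 0)) _.
move=> xs /=; move: {2}(a0 xs) => y.
by elim: (a0 xs) => //= n ->; rewrite expnS mul2n addnn.
Qed.

Definition riszero := RComp (rprec (rconst 1) RZero) [:: RProj 0; RProj 0].

Lemma computes_iszero : computes riszero (fun xs => nat_of_bool (a0 xs == 0%N)).
Proof.
apply: computes_ext (computes_comp2 (F := prim_rec (fun _ => 1%N) (fun _ _ _ => 0%N))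
  (computes_prec (computes_const 1) computes_zero) (computes_proj 0) (computes_proj 0)) _.
by move=> xs; case: (a0 xs).
Qed.

Lemma computes_iszero_comp g G : computes g G ->
  computes (RComp riszero [:: g]) (fun xs => nat_of_bool (G xs == 0%N)).
Proof. exact: (computes_comp1 (F := fun x => nat_of_bool (x == 0%N)) computes_iszero). Qed.

Definition rleq := RComp riszero [:: rsub].

Lemma computes_leq : computes rleq (fun xs => nat_of_bool (a0 xs <= a1 xs)%N).
Proof.
apply: computes_ext (computes_iszero_comp computes_sub) _.
by move=> xs; rewrite /= subn_eq0.
Qed.

Lemma computes_leq_comp g G h H : computes g G -> computes h H ->
  computes (RComp rleq [:: g; h]) (fun xs => nat_of_bool (G xs <= H xs)%N).
Proof. exact: (computes_comp2 (F := fun x y => nat_of_bool (x <= y)%N) computes_leq). Qed.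

Definition reqn := RComp rmul [:: rleq; RComp rleq [:: RProj 1; RProj 0]].

Lemma computes_eqn_comp g G h H : computes g G -> computes h H ->
  computes (RComp reqn [:: g; h]) (fun xs => nat_of_bool (G xs == H xs)).
Proof.
have ceq : computes reqn (fun xs => nat_of_bool (a0 xs == a1 xs)).
  apply: computes_ext (computes_comp2 computes_mul computes_leq
    (computes_leq_comp (computes_proj 1) (computes_proj 0))) _.
  by move=> xs /=; rewrite eqn_leq; do 2 case: (_ <= _)%N.
exact: (computes_comp2 (F := fun x y => nat_of_bool (x == y)) ceq).
Qed.

Definition rif := RComp radd
  [:: RComp rmul [:: RComp riszero [:: riszero]; RProj 1]; RComp rmul [:: riszero; RProj 2]].

Lemma computes_if : computes rif (fun xs => if a0 xs != 0%N then a1 xs else a2 xs).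
Proof.
apply: computes_ext (computes_comp2 computes_add
  (computes_comp2 computes_mul (computes_iszero_comp computes_iszero) (computes_proj 1))
  (computes_comp2 computes_mul computes_iszero (computes_proj 2))) _.
by move=> xs /=; case: (a0 xs) => [|n] /=; rewrite ?mul1n ?mul0n ?addn0.
Qed.

Lemma computes_if_comp g G h H k K :
  computes g G -> computes h H -> computes k K ->
  computes (RComp rif [:: g; h; k]) (fun xs => if G xs != 0%N then H xs else K xs).
Proof. exact: (computes_comp3 (F := fun b x y => if b != 0%N then x else y) computes_if). Qed.

Definition rodd := RComp (rprec RZero (RComp riszero [:: RProj 1])) [:: RProj 0; RProj 0].

Lemma computes_odd : computes rodd (fun xs => nat_of_bool (odd (a0 xs))).
Proof.
apply: computes_ext (computes_comp2
  (F := prim_rec (fun _ => 0%N) (fun _ z _ => nat_of_bool (z == 0%N)))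
  (computes_prec computes_zero (computes_iszero_comp (computes_proj 1)))
  (computes_proj 0) (computes_proj 0)) _.
move=> xs /=; move: {2}(a0 xs) => y.
by elim: (a0 xs) => //= n ->; case: (odd n).
Qed.

Definition rdiv := RMu (RComp rleq
  [:: RComp rmul [:: rsucc; RComp radd [:: RProj 2; RComp riszero [:: RProj 2]]]; RProj 1]).

(* Division by 0 is replaced by division by 1, which keeps the minimisation total. *)
Lemma computes_div_comp g G h H : computes g G -> computes h H ->
  computes (RComp rdiv [:: g; h]) (fun xs => G xs %/ (H xs + (H xs == 0%N)))%N.
Proof.
pose D xs := (a1 xs + (a1 xs == 0%N))%N.
have D_gt0 xs : (0 < D xs)%N by rewrite /D; case: (a1 xs).
have cdiv : computes rdiv (fun xs => a0 xs %/ D xs)%N.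
  apply: (computes_mu (F := fun q xs => nat_of_bool (q.+1 * D xs <= a0 xs))%N).
  - apply: computes_ext (computes_leq_comp (computes_comp2 computes_mul computes_succ
      (computes_comp2 computes_add (computes_proj 2) (computes_iszero_comp (computes_proj 2))))
      (computes_proj 1)) _.
    by case=> [|q [|x [|d xs]]].
  - by move=> xs; rewrite leqNgt (ltn_ceil _ (D_gt0 xs)).
  - move=> xs k lt; suff -> : (k.+1 * D xs <= a0 xs)%N by [].
    by apply: leq_trans (leq_divM _ (D xs)); rewrite leq_mul2r lt orbT.
exact: (computes_comp2 (F := fun x d => x %/ (d + (d == 0%N))) cdiv).
Qed.

Definition rlog2 := RMu (RComp reqn
  [:: RComp rmul [:: RComp rexp2 [:: rsucc];
        RComp rdiv [:: RComp rsucc [:: RProj 1]; RComp rexp2 [:: rsucc]]];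
      RComp rsucc [:: RProj 1]]).

(* [logn 2 k.+1] is the least [a] such that [2 ^ a.+1] does not divide [k.+1]. *)
Lemma computes_log2 : computes rlog2 (fun xs => logn 2 (a0 xs).+1).
Proof.
have div_exp2 x a : (x %/ (2 ^ a + (2 ^ a == 0%N)) = x %/ 2 ^ a)%N.
  by rewrite eqn0Ngt expn_gt0 addn0.
have cexp2S := computes_comp1 computes_exp2 computes_succ.
apply: (computes_mu (F := fun a xs =>
  nat_of_bool (2 ^ a.+1 * ((a0 xs).+1 %/ 2 ^ a.+1) == (a0 xs).+1)%N)).
- apply: computes_ext (computes_eqn_comp (computes_comp2 computes_mul cexp2S
      (computes_div_comp (computes_comp1 computes_succ (computes_proj 1)) cexp2S))
    (computes_comp1 computes_succ (computes_proj 1))) _.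
  by case=> [|a [|k xs]] /=; rewrite ?div_exp2.
- by move=> xs; rewrite mulnC -dvdn_eq pfactor_dvdn //; rewrite ltnn.
- by move=> xs k lt; rewrite mulnC -dvdn_eq pfactor_dvdn // lt.
Qed.

Definition dec_exp (k : nat) := logn 2 k.+1.
Definition dec_den (k : nat) := (k.+1 %/ 2 ^ (dec_exp k).+1)%N.
Definition dec_mag (k : nat) := ((dec_exp k).+1 %/ 2)%N.
Definition dec_neg (k : nat) := odd (dec_exp k).

Local Open Scope ring_scope.

Lemma dec_ratE k : dec_rat k =
  (if dec_neg k then - (dec_mag k)%:R else (dec_mag k)%:R) / (dec_den k).+1%:R.
Proof.
rewrite /dec_rat /unpair /dec_den /dec_mag /dec_neg -/(dec_exp k); congr (_ / _).
  rewrite /dec_int divn2; case: ifP => odd_e /=; first by rewrite intrN.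
  by rewrite uphalf_half odd_e.
by rewrite -divn2 -divnMA -expnSr.
Qed.

Lemma dec_rat0 : dec_rat 0 = 0.
Proof. by rewrite /dec_rat /unpair logn1. Qed.

Definition rdec_den := RComp rdiv [:: rsucc; RComp rexp2 [:: RComp rsucc [:: rlog2]]].
Definition rdec_mag := RComp rdiv [:: RComp rsucc [:: rlog2]; rconst 2].
Definition rdec_neg := RComp rodd [:: rlog2].

Lemma computes_dec_den : computes rdec_den (fun xs => dec_den (a0 xs)).
Proof.
apply: computes_ext (computes_div_comp computes_succ
  (computes_comp1 computes_exp2 (computes_comp1 computes_succ computes_log2))) _.
by move=> xs; rewrite /= eqn0Ngt expn_gt0 addn0.
Qed.

Lemma computes_dec_mag : computes rdec_mag (fun xs => dec_mag (a0 xs)).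
Proof.
exact: computes_div_comp (computes_comp1 computes_succ computes_log2) (computes_const 2).
Qed.

Lemma computes_dec_neg : computes rdec_neg (fun xs => nat_of_bool (dec_neg (a0 xs))).
Proof.
exact: (computes_comp1 (F := fun x => nat_of_bool (odd x)) computes_odd computes_log2).
Qed.

Definition dec_leq (k1 k2 : nat) : bool :=
  if dec_neg k1 then
    ~~ dec_neg k2 || (dec_mag k2 * (dec_den k1).+1 <= dec_mag k1 * (dec_den k2).+1)%N
  else ~~ dec_neg k2 && (dec_mag k1 * (dec_den k2).+1 <= dec_mag k2 * (dec_den k1).+1)%N.

Lemma dec_leqE k1 k2 : dec_leq k1 k2 = (dec_rat k1 <= dec_rat k2).
Proof.
have mag_gt0 k : dec_neg k -> (0 < dec_mag k)%N.
  by rewrite /dec_neg /dec_mag divn2; case: (dec_exp k).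
rewrite !dec_ratE ler_pdivrMr ?ltr0Sn // mulrAC ler_pdivlMr ?ltr0Sn // /dec_leq.
move: (mag_gt0 k1) (mag_gt0 k2); case: (dec_neg k1); case: (dec_neg k2) => /= h1 h2.
- by rewrite !mulNr lerN2 -!natrM ler_nat.
- by rewrite mulNr (@le_trans _ _ 0) // ?oppr_le0 // mulr_ge0.
- apply/esym/negbTE; rewrite -ltNge mulNr (@lt_le_trans _ _ 0) //.
    by rewrite oppr_lt0 mulr_gt0 ?ltr0n ?h2.
- by rewrite -!natrM ler_nat.
Qed.

Definition rdec_leq :=
  let cross i j := RComp rmul [:: RComp rdec_mag [:: RProj i];
                                  RComp rsucc [:: RComp rdec_den [:: RProj j]]] in
  RComp rif [:: RComp rdec_neg [:: RProj 0];
    RComp rif [:: RComp rdec_neg [:: RProj 1]; RComp rleq [:: cross 1 0; cross 0 1]; rconst 1];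
    RComp rif [:: RComp rdec_neg [:: RProj 1]; RZero; RComp rleq [:: cross 0 1; cross 1 0]]].

Lemma computes_dec_leq : computes rdec_leq (fun xs => nat_of_bool (dec_leq (a0 xs) (a1 xs))).
Proof.
have cneg i := computes_comp1 (F := fun k => nat_of_bool (dec_neg k))
  computes_dec_neg (computes_proj i).
have cross i j := computes_comp2 computes_mul
  (computes_comp1 computes_dec_mag (computes_proj i))
  (computes_comp1 computes_succ (computes_comp1 computes_dec_den (computes_proj j))).
apply: computes_ext (computes_if_comp (cneg 0%N)
  (computes_if_comp (cneg 1%N) (computes_leq_comp (cross 1%N 0%N) (cross 0%N 1%N))
    (computes_const 1))
  (computes_if_comp (cneg 1%N) computes_zero
    (computes_leq_comp (cross 0%N 1%N) (cross 1%N 0%N)))) _.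
by move=> xs; rewrite /dec_leq; do 2 case: dec_neg.
Qed.

Definition dec_max (k1 k2 : nat) : nat := if dec_leq k1 k2 then k2 else k1.

Definition rdec_max := RComp rif [:: rdec_leq; RProj 1; RProj 0].

Lemma computes_dec_max : computes rdec_max (fun xs => dec_max (a0 xs) (a1 xs)).
Proof.
apply: computes_ext
  (computes_if_comp computes_dec_leq (computes_proj 1) (computes_proj 0)) _.
by move=> xs; rewrite /dec_max; case: dec_leq.
Qed.

Lemma dec_rat_max k1 k2 : dec_rat (dec_max k1 k2) = Num.max (dec_rat k1) (dec_rat k2).
Proof. by rewrite /dec_max dec_leqE; case: leP. Qed.

Fixpoint dec_runmax (K : nat -> nat) (n : nat) : nat :=
  if n is n'.+1 then dec_max (dec_runmax K n') (K n) else K 0%N.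

Lemma dec_runmax_ge K n : dec_rat (K n) <= dec_rat (dec_runmax K n).
Proof. by case: n => [|n] //=; rewrite dec_rat_max le_max lexx orbT. Qed.

Lemma dec_runmax_mono K n : dec_rat (dec_runmax K n) <= dec_rat (dec_runmax K n.+1).
Proof. by rewrite /= dec_rat_max le_max lexx. Qed.

Lemma dec_runmax_attained K n : exists2 k, (k <= n)%N & dec_runmax K n = K k.
Proof.
elim: n => [|n [k le_kn IH]] /=; first by exists 0%N.
by rewrite /dec_max IH; case: ifP => _; [exists n.+1 | exists k; rewrite ?leqW].
Qed.

Definition rrunmax (c : rcode) (args : seq rcode) :=
  rprec (RComp c (RZero :: RProj 0 :: args))
        (RComp rdec_max [:: RProj 1; RComp c (rsucc :: RProj 2 :: args)]).

Lemma reval_runmax c args vs e K :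
  (forall xs, revals args xs vs) ->
  (forall n, reval c [:: n, e & vs] (K n)) ->
  forall n, reval (rrunmax c args) [:: n; e] (dec_runmax K n).
Proof.
move=> hargs hK n; apply: ev_comp; first by do ! constructor.
elim: n => [|n IH] /=.
  apply/ev_prec0/(ev_comp _ (hK 0%N)).
  by apply: evs_cons; [exact: ev_zero | apply: evs_cons; first exact: ev_proj].
apply: ev_precS IH _; apply: (ev_comp _ (computes_dec_max [:: _; K n.+1])).
apply: evs_cons; first exact: ev_proj.
apply/evs_cons/evs_nil/(ev_comp _ (hK n.+1)).
apply: evs_cons; first exact: computes_succ.
by apply: evs_cons; first exact: ev_proj.
Qed.

(* On [[:: n; e; i; j; p]], part [p] (0 real, 1 imaginary) of entry [(i, j)] of a
   scalar matrix whose diagonal is computed by [c] on [[:: n; e]]. *)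
Definition rscalar_entry (c : rcode) :=
  RComp rif [:: RComp rmul [:: RComp reqn [:: RProj 2; RProj 3]; RComp riszero [:: RProj 4]];
                RComp c [:: RProj 0; RProj 1]; RZero].

Lemma reval_scalar_entry c n e i j p k : reval c [:: n; e] k ->
  reval (rscalar_entry c) [:: n; e; i; j; p] (if (i == j) && (p == 0%N) then k else 0%N).
Proof.
move=> hk; set b := (i == j) && (p == 0%N).
have -> : (if b then k else 0%N) = if nat_of_bool b != 0%N then k else 0%N by case: b.
apply: (ev_comp _ (computes_if [:: nat_of_bool b; k; 0%N])).
apply: evs_cons.
  have := computes_comp2 computes_mul (computes_eqn_comp (computes_proj 2) (computes_proj 3))
    (computes_iszero_comp (computes_proj 4)).
  by move/(_ [:: n; e; i; j; p]); rewrite /= mulnb.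
apply: evs_cons; last by apply/evs_cons/evs_nil/ev_zero.
apply: (ev_comp _ hk).
by apply: evs_cons; [exact: ev_proj | apply/evs_cons/evs_nil/ev_proj].
Qed.

Local Open Scope complex_scope.

Section Loewner.
Variables (R : realType) (N : nat).
Implicit Types (A B C : 'M[R[i]]_N) (v x y : 'cV[R[i]]_N).

Definition vadj v : 'rV[R[i]]_N := (map_mx conjc v)^T.
Definition qform A v : R[i] := (vadj v *m A *m v) 0 0.
Definition sqnorm v : R[i] := \sum_j (v j 0)^* * v j 0.

Lemma vadjD x y : vadj (x + y) = vadj x + vadj y.
Proof. by apply/matrixP => i j; rewrite !mxE rmorphD. Qed.

Lemma vadjN x : vadj (- x) = - vadj x.
Proof. by apply/matrixP => i j; rewrite !mxE rmorphN. Qed.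

Lemma vadjZ a x : vadj (a *: x) = a^* *: vadj x.
Proof. by apply/matrixP => i j; rewrite !mxE rmorphM. Qed.

Lemma qformB A B v : qform (A - B) v = qform A v - qform B v.
Proof. by rewrite /qform mulmxBr mulmxBl !mxE. Qed.

Lemma qformZ a A v : qform (a *: A) v = a * qform A v.
Proof. by rewrite /qform -scalemxAr -scalemxAl mxE. Qed.

Lemma qform1 v : qform 1%:M v = sqnorm v.
Proof. by rewrite /qform mulmx1 /sqnorm mxE; apply: eq_bigr => j _; rewrite !mxE. Qed.

Lemma qform_scalev A a x : qform A (a *: x) = a^* * a * qform A x.
Proof. by rewrite /qform vadjZ -!scalemxAl -scalemxAr !mxE mulrA. Qed.

Lemma qform_delta A j : qform A (delta_mx j 0) = A j j.
Proof.
rewrite /qform !mxE (bigD1 j) //= big1 => [|k kj]; last first.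
  by rewrite !mxE eqxx andbT (negbTE kj) mulr0.
rewrite addr0 !mxE (bigD1 j) //= big1 => [|k kj]; last first.
  by rewrite !mxE eqxx andbT (negbTE kj) conjc0 mul0r.
by rewrite addr0 !mxE !eqxx conjc1 mul1r mulr1.
Qed.

Lemma qform_parallelogram A x y :
  qform A (x + y) + qform A (x - y) = 2%:R * qform A x + 2%:R * qform A y.
Proof.
rewrite /qform !vadjD vadjN !(mulmxDl, mulmxDr, mulNmx, mulmxN) !mxE.
by rewrite !mulr_natl !mulr2n; ring.
Qed.

Lemma psd_qform_ge0 A v : psd A -> 0 <= qform A v.
Proof. by case=> _ /(_ v). Qed.

Lemma psd_diag_ge0 A j : psd A -> 0 <= A j j.
Proof. by move=> /(psd_qform_ge0 (delta_mx j 0)); rewrite qform_delta. Qed.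

Lemma psd_diag_real A j : psd A -> A j j = (complex.Re (A j j))%:C.
Proof.
move/(psd_diag_ge0 j); rewrite lecE => /andP[/eqP im0 _].
by case: (A j j) im0 => a b /= ->.
Qed.

Lemma psd_qformD_le A x y : psd A ->
  qform A (x + y) <= 2%:R * qform A x + 2%:R * qform A y.
Proof. by move=> pA; rewrite -qform_parallelogram lerDl psd_qform_ge0. Qed.

Lemma psd_qform_sum_le A (I : Type) (r : seq I) (F : I -> 'cV[R[i]]_N) : psd A ->
  qform A (\sum_(j <- r) F j) <= 2%:R ^+ size r * \sum_(j <- r) qform A (F j).
Proof.
move=> pA; elim: r => [|a r IH]; first by rewrite !big_nil /qform mulmx0 mxE mulr0.
rewrite !big_cons /= (le_trans (psd_qformD_le _ _ pA)) //.
rewrite exprS -mulrA mulrDr mulrDr lerD //.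
  rewrite ler_wpM2l // ?ler0n // -[leLHS]mul1r ler_wpM2r ?psd_qform_ge0 //.
  by rewrite exprn_ege1 // ler1n.
by rewrite ler_wpM2l // ler0n.
Qed.

Lemma sqnorm_ge0 v : 0 <= sqnorm v.
Proof. by apply: sumr_ge0 => j _; rewrite mulrC mulcJ_ge0. Qed.

Lemma sqnorm_ge_coord v j : (v j 0)^* * v j 0 <= sqnorm v.
Proof.
rewrite /sqnorm (bigD1 j) //= lerDl; apply: sumr_ge0 => k _.
by rewrite mulrC mulcJ_ge0.
Qed.

(* Splitting [v] along the standard basis and iterating [psd_qformD_le] costs [2 ^ N]. *)
Lemma psd_qform_le_trace A v : psd A -> qform A v <= 2%:R ^+ N * \tr A * sqnorm v.
Proof.
move=> pA.
have ev : v = \sum_j (v j 0 *: delta_mx j 0).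
  apply/matrixP => i k; rewrite summxE (bigD1 i) //= big1 => [|j ji].
    by rewrite !mxE (ord1 k) !eqxx mulr1 addr0.
  by rewrite !mxE (ord1 k) eqxx andbT eq_sym (negbTE ji) mulr0.
rewrite {1}ev; apply: (le_trans (psd_qform_sum_le _ _ pA)).
have -> : size (index_enum 'I_N) = N by rewrite /index_enum unlock -enumT size_enum_ord.
rewrite -mulrA ler_wpM2l ?exprn_ge0 ?ler0n //.
rewrite /mxtrace mulr_suml; apply: ler_sum => j _.
by rewrite qform_scalev qform_delta mulrC ler_wpM2l ?psd_diag_ge0 ?sqnorm_ge_coord.
Qed.

Lemma adjmxD A B : adjmx (A + B) = adjmx A + adjmx B.
Proof. by apply/matrixP => i j; rewrite !mxE rmorphD. Qed.

Lemma adjmxN A : adjmx (- A) = - adjmx A.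
Proof. by apply/matrixP => i j; rewrite !mxE rmorphN. Qed.

Lemma adjmx_scale_real (a : R) A : adjmx (a%:C *: A) = a%:C *: adjmx A.
Proof. by apply/matrixP => i j; rewrite !mxE; case: (A j i) => p q /=; simpc. Qed.

Lemma adjmx1 : adjmx (1%:M : 'M[R[i]]_N) = 1%:M.
Proof.
apply/matrixP => i j; rewrite !mxE eq_sym.
by case: (i == j); [exact: conjc1 | exact: conjc0].
Qed.

(* Qualified, since MathComp's sesquilinear library also defines [hermitian]. *)
Lemma hermitianD A B : Defs.hermitian A -> Defs.hermitian B -> Defs.hermitian (A + B).
Proof. by rewrite /Defs.hermitian adjmxD => -> ->. Qed.

Lemma hermitianB A B : Defs.hermitian A -> Defs.hermitian B -> Defs.hermitian (A - B).
Proof. by rewrite /Defs.hermitian adjmxD adjmxN => -> ->. Qed.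

Lemma hermitianZ (a : R) A : Defs.hermitian A -> Defs.hermitian (a%:C *: A).
Proof. by rewrite /Defs.hermitian adjmx_scale_real => ->. Qed.

Lemma hermitian_scalar (a : R) : Defs.hermitian (a%:C *: 1%:M : 'M[R[i]]_N).
Proof. exact/hermitianZ/adjmx1. Qed.

Lemma loewnerP A B : loewner_le A B <->
  Defs.hermitian (B - A) /\ forall v, qform A v <= qform B v.
Proof.
by split=> -[h q]; split=> // v; [move: (q v) | ]; rewrite -/(qform _ _) qformB subr_ge0.
Qed.

Lemma loewner_le_trans A B C : loewner_le A B -> loewner_le B C -> loewner_le A C.
Proof.
move=> /loewnerP[hAB leAB] /loewnerP[hBC leBC]; apply/loewnerP; split.
  by rewrite -[C - A](subrKA B); apply: hermitianD.
by move=> v; apply: le_trans (leAB v) (leBC v).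
Qed.

Lemma loewner_le_scale (c : R) A B :
  0 <= c -> loewner_le A B -> loewner_le (c%:C *: A) (c%:C *: B).
Proof.
move=> c0 /loewnerP[h le]; apply/loewnerP; split; first by rewrite -scalerBr; apply: hermitianZ.
by move=> v; rewrite !qformZ ler_wpM2l ?lecR.
Qed.

Lemma loewner_le_scalar (a b : R) :
  a <= b -> loewner_le (a%:C *: 1%:M : 'M[R[i]]_N) (b%:C *: 1%:M).
Proof.
move=> ab; apply/loewnerP; split; first exact/hermitianB/hermitian_scalar/hermitian_scalar.
by move=> v; rewrite !qformZ qform1 ler_wpM2r ?sqnorm_ge0 ?lecR.
Qed.

Lemma psd_loewner_le_trace A (t : R) :
  psd A -> \tr A <= t%:C -> loewner_le A ((2%:R ^+ N * t)%:C *: 1%:M).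
Proof.
move=> pA trA; apply/loewnerP; split.
  by apply/hermitianB/pA.1; apply: hermitian_scalar.
move=> v; apply: (le_trans (psd_qform_le_trace v pA)).
rewrite qformZ qform1 ler_wpM2r ?sqnorm_ge0 // rmorphM rmorphXn rmorph_nat.
by rewrite ler_wpM2l ?exprn_ge0 ?ler0n.
Qed.

Lemma semiPOVM_psd (M : seq bool -> 'M[R[i]]_N) s : semiPOVM M -> psd (M s).
Proof. by case=> /(_ s); rewrite /loewner_le subr0. Qed.

End Loewner.
Local Open Scope classical_set_scope.

Section Transfer.
Variables (R : realType) (N : nat).
(* [R[i]] as a [numClosedFieldType]: the structure whose norm topology is used for
   the convergence statements of [lower_computable_semiPOVM]. *)
Local Notation C := (complex_complex__canonical__Num_ClosedField R).

Lemma nondecreasing_le_lim (u : nat -> R) (l : R) :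
  (forall n, u n <= u n.+1) -> u @ \oo --> l -> forall n, u n <= l.
Proof.
move=> mu cu n; rewrite -(cvg_lim _ cu) //.
apply: nondecreasing_cvgn_le (cvgP _ cu) n.
by apply: homo_leq => //; exact: le_trans.
Qed.

Lemma esum_le1P (r : seq bool -> R) : (forall s, 0 <= r s) ->
  (\esum_(s in [set: seq bool]) (r s)%:E <= 1)%E <->
  forall S : seq (seq bool), uniq S -> \sum_(s <- S) r s <= 1.
Proof.
move=> r0; split=> [he S uS | hS].
  rewrite -lee_fin; apply: le_trans he.
  rewrite -sumEFin fsbig_seq //; apply: esum_ge.
  by exists [set` S] => //; split => //; exact: finite_seq.
apply: ge_ereal_sup => _ [X [finX _] <-].
by rewrite fsbig_finite // sumEFin lee_fin; apply/hS/finmap.fset_uniq.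
Qed.

Lemma cvg_realC (u : nat -> R) (l : R) :
  (fun n => (u n)%:C : C) @ \oo --> (l%:C : C) <-> u @ \oo --> l.
Proof.
have distC x y : `|x%:C - y%:C| = `|x - y|%:C :> C.
  by rewrite -rmorphB normc_def /= expr0n /= addr0 sqrtr_sqr.
split=> /cvgrPdist_lt cu; apply/cvgrPdist_lt => e e_gt0.
  by apply: filterS (cu e%:C _) => [n|]; rewrite ?distC ltcR.
have [e' e_eq] : exists e', e = e'%:C.
  by move: e_gt0; rewrite ltcE => /andP[/eqP im0 _]; exists (complex.Re e); case: e im0 => a b /= ->.
by move: e_gt0; rewrite e_eq ltcR => /cu; apply: filterS => n; rewrite distC ltcR.
Qed.

Lemma cvg_ReC (z : nat -> R[i]) (w : R[i]) :
  (fun n => 'Re (z n) : C) @ \oo --> ('Re w : C) <-> (fun n => complex.Re (z n)) @ \oo --> complex.Re w.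
Proof.
rewrite -cvg_realC complexRe.
by have -> : (fun n => (complex.Re (z n))%:C : C) = (fun n => 'Re (z n))
  by apply: funext => n; rewrite complexRe.
Qed.

Lemma cvg_ReIm_realC (z : nat -> C) (w : C) (u : nat -> R) (l : R) :
  (forall n, z n = (u n)%:C) -> w = l%:C -> u @ \oo --> l ->
  (fun n => 'Re (z n)) @ \oo --> 'Re w /\ (fun n => 'Im (z n)) @ \oo --> 'Im w.
Proof.
move=> /funext -> -> cu; split.
  by rewrite -complexRe; under eq_fun do rewrite -complexRe; exact/cvg_realC.
by rewrite -complexIm; under eq_fun do rewrite -complexIm; exact: cvg_cst.
Qed.


Lemma scalar_mx_entry (x : R) (i j : 'I_N) :
  ((x%:C *: 1%:M : 'M[R[i]]_N) i j) = (if i == j then x else 0)%:C.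
Proof. by rewrite !mxE; case: eqP; rewrite ?mulr1 ?mulr0. Qed.

Lemma scalar_lower_computable_semiPOVM (m : seq bool -> R) : lower_computable_semimeasure m ->
  lower_computable_semiPOVM (fun s => (m s)%:C *: (1%:M : 'M[R[i]]_N)).
Proof.
case=> -[m_ge0 /(esum_le1P m_ge0) m_sum] [F [[c hc] [F_mono F_lim]]].
have F_le n s : ratr (F n s) <= m s.
  by apply: nondecreasing_le_lim (F_lim s) n => k; rewrite ler_rat.
have scalar0 : (0 : 'M[R[i]]_N) = 0%:C *: 1%:M by rewrite scale0r.
split; first split.
- by move=> s; rewrite scalar0; apply: loewner_le_scalar.
- move=> S uS; rewrite -scaler_suml -rmorph_sum -[X in loewner_le _ X]scale1r.
  exact/loewner_le_scalar/m_sum.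
exists (fun n s => (ratr (F n s))%:C *: 1%:M); split; [|split].
- split=> [n s|]; first exact: hermitian_scalar.
  exists (rscalar_entry c) => n s i j; have [k [hk <-]] := hc n s.
  exists (if (i == j :> nat) && true then k else 0%N).
  exists (if (i == j :> nat) && false then k else 0%N).
  do 2 (split; first exact: reval_scalar_entry).
  rewrite scalar_mx_entry /qi andbT andbF dec_rat0 rmorph0.
  case: (i =P j) => [->|ij]; first by rewrite !eqxx.
  have /negbTE ijn : (i : nat) != j by apply/eqP => /val_inj.
  by rewrite ijn dec_rat0 !rmorph0.
- move=> s i j; apply: cvg_ReIm_realC => [n||]; rewrite ?scalar_mx_entry //.
  by case: eqP => _; [apply: F_lim | apply: cvg_cst].
- by move=> n s; apply: loewner_le_scalar.
Qed.

Lemma lec_Re (x y : R[i]) : x <= y -> complex.Re x <= complex.Re y.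
Proof. by rewrite lecE => /andP[]. Qed.

Lemma Re_sum (I : Type) (r : seq I) (f : I -> R[i]) :
  complex.Re (\sum_(x <- r) f x) = \sum_(x <- r) complex.Re (f x).
Proof.
elim: r => [|a r IH]; first by rewrite !big_nil.
by rewrite !big_cons -IH; case: (f a); case: (\sum_(x <- r) f x).
Qed.

Lemma diag_lower_computable_semimeasure (M : seq bool -> 'M[R[i]]_N) (j : 'I_N) : lower_computable_semiPOVM M ->
  lower_computable_semimeasure (fun s => complex.Re (M s j j)).
Proof.
case=> semiM [F [[_ [c hc]] [F_lim F_le]]].
have M_diag_ge0 s : 0 <= complex.Re (M s j j).
  exact/(@lec_Re 0)/psd_diag_ge0/(semiPOVM_psd s semiM).
have F_diag_le n s : complex.Re (F n s j j) <= complex.Re (M s j j).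
  by apply/lec_Re; move/loewnerP: (F_le n s) => [_ /(_ (delta_mx j 0))]; rewrite !qform_delta.
have /choice[K hK] : forall ns : nat * seq bool, exists k,
    reval c [:: ns.1; enc_str ns.2; (j : nat); (j : nat); 0%N] k /\
    complex.Re (F ns.1 ns.2 j j) = ratr (dec_rat k).
  by case=> n s; have [kr [ki [hr [_ ->]]]] := hc n s j j; exists kr.
pose G n s := dec_runmax (fun k => K (k, s)) n.
split; first split=> //.
  apply/(esum_le1P M_diag_ge0) => S uS.
  move/loewnerP: (semiM.2 S uS) => [_ /(_ (delta_mx j 0))].
  by rewrite !qform_delta summxE mxE eqxx => /lec_Re; rewrite Re_sum.
exists (fun n s => dec_rat (G n s)); split; [|split].
- exists (rrunmax c [:: rconst j; rconst j; RZero]) => n s; exists (G n s); split=> //.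
  apply: (reval_runmax (vs := [:: (j : nat); (j : nat); 0%N])) => [xs|k].
    by do 2 (apply: evs_cons; first exact: computes_const); apply/evs_cons/evs_nil/ev_zero.
  exact: (hK (k, s)).1.
- by move=> n s; exact: dec_runmax_mono.
- move=> s; apply: (squeeze_cvgr (f := fun n => complex.Re (F n s j j))
    (h := fun _ => complex.Re (M s j j))); last exact: cvg_cst.
    apply: nearW => n; rewrite (hK (n, s)).2 ler_rat dec_runmax_ge /=.
    rewrite /G; have [k _ ->] := dec_runmax_attained (fun k => K (k, s)) n.
    by rewrite -(hK (k, s)).2.
  exact/cvg_ReC/(F_lim s j j).1.
Qed.

End Transfer.

Section Universality.
Variables (R : realType) (N : nat).

Lemma universal_scalar_lower (M : seq bool -> 'M[R[i]]_N) (m : seq bool -> R) :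
  universal_semiPOVM M -> lower_computable_semimeasure m ->
  exists2 c : R, 0 < c & forall s, loewner_le ((c * m s)%:C *: 1%:M) (M s).
Proof.
move=> [_ univM] hm.
have [c c_gt0 le_cM] := univM _ (scalar_lower_computable_semiPOVM N hm).
exists c; first exact: c_gt0.
by move=> s; rewrite rmorphM -scalerA; apply: le_cM.
Qed.

Lemma universal_trace_upper (M : seq bool -> 'M[R[i]]_N) (m : seq bool -> R) :
  universal_probability m -> lower_computable_semiPOVM M ->
  exists2 K : R, 0 < K & forall s, \tr (M s) <= (K * m s)%:C.
Proof.
move=> [[[m_ge0 _] _] univm] lcM.
have /choice[c hc] : forall j : 'I_N, exists c : R,
    0 < c /\ forall s, c * complex.Re (M s j j) <= m s.
  move=> j; have [c c_gt0 hc] := univm _ (diag_lower_computable_semimeasure j lcM).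
  by exists c; split; [exact: c_gt0 | exact: hc].
have c_gt0 j : 0 < c j := (hc j).1.
exists (1 + \sum_j (c j)^-1).
  by rewrite ltr_pwDl ?ltr01 ?sumr_ge0 // => j _; rewrite invr_ge0 ltW.
move=> s; have psdM := semiPOVM_psd s lcM.1.
apply: (@le_trans _ _ (\sum_j ((c j)^-1 * m s)%:C)).
  apply: ler_sum => j _; rewrite (psd_diag_real j psdM) lecR.
  by rewrite ler_pdivlMl ?c_gt0 ?(hc j).2.
by rewrite -rmorph_sum lecR mulrDl mul1r -mulr_suml lerDr m_ge0.
Qed.

End Universality.

Theorem mainTheorem7 (R : realType) (N : nat) (HN : (0 < N)%N)
    (M : seq bool -> 'M[R[i]]_N) (m : seq bool -> R) :
  universal_semiPOVM M -> universal_probability m ->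
  exists2 c : R, 0 < c &
    forall s, loewner_le (c%:C *: M s) ((m s)%:C *: 1%:M) /\
              loewner_le ((c * m s)%:C *: 1%:M) (M s).
Proof.
move=> univM univm.
have [c1 c1_gt0 lowM] := universal_scalar_lower univM univm.1.
have [K K_gt0 trM] := universal_trace_upper univm univM.1.
have m_ge0 s : 0 <= m s := univm.1.1.1 s.
pose c2 := (2%:R ^+ N * K)^-1.
have c2_gt0 : 0 < c2 by rewrite invr_gt0 mulr_gt0 // exprn_gt0.
exists (Num.min c1 c2); first by rewrite lt_min c1_gt0.
move=> s; have psdM := semiPOVM_psd s univM.1.1.
have c_ge0 : 0 <= Num.min c1 c2 by rewrite le_min !ltW.
split.
- apply: loewner_le_trans
    (loewner_le_scale c_ge0 (psd_loewner_le_trace psdM (trM s))) _.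
  rewrite scalerA -rmorphM; apply: loewner_le_scalar.
  rewrite !mulrA -[leRHS]mul1r ler_wpM2r // -mulrA -ler_pdivlMr ?mulr_gt0 ?exprn_gt0 //.
  by rewrite mul1r ge_min lexx orbT.
- apply: loewner_le_trans (lowM s); apply: loewner_le_scalar.
  by rewrite ler_wpM2r // ge_min lexx.
Qed.
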